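(* Let $u_0,u_1,u_2,u_3$ be nodes of $G$ such that $u_3$ lies on a shortest path between $u_1$ and $u_2$, all pairwise distances among $u_0,u_1,u_2,u_3$ are strictly positive except possibly $d_{u_1,u_3}$, and $$d_{u_1,u_3}=\left\lceil \frac{d_{u_1,u_2}+d_{u_0,u_1}-d_{u_0,u_2}}{2}\right\rceil .$$ Then $$\left\lceil \frac{d_{u_0,u_1}+d_{u_0,u_2}+d_{u_1,u_2}}{2}\right\rceil \le d_{u_0,u_3}+d_{u_1,u_2}\le \left\lceil \frac{d_{u_0,u_1}+d_{u_0,u_2}+d_{u_1,u_2}}{2}\right\rceil + 2\,\delta_{u_0,u_1,u_2,u_3}.$$
   Context: $G=(V,E)$ is a finite connected undirected graph with $n\ge 4$ nodes and $d_{u,v}$ denotes the shortest-path distance (number of edges) between nodes $u,v$. For any four nodes $w_1,w_2,w_3,w_4$, form the three sums $d_{w_1,w_2}+d_{w_3,w_4}$, $d_{w_1,w_3}+d_{w_2,w_4}$, $d_{w_1,w_4}+d_{w_2,w_3}$, order them as $S\le M\le L$, and set $\delta_{w_1,w_2,w_3,w_4}=(L-M)/2$. Also $\delta_{\mathrm{worst}}(G)=\max_{w_1,w_2,w_3,w_4\in V}\delta_{w_1,w_2,w_3,w_4}$. *)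

From HB Require Import structures.
From mathcomp Require Import all_boot all_order all_algebra.
Set Implicit Arguments. Unset Strict Implicit. Unset Printing Implicit Defensive.
Import Order.TTheory GRing.Theory Num.Theory.

Definition walk_n (T : finType) (e : rel T) (u v : T) (n : nat) : bool :=
  [exists p : n.-tuple T, path e u p && (last u p == v)].

(* shortest-path distance: least n (< #|T|) admitting a walk of length n.
   In a connected graph a shortest path has at most #|T|-1 edges, so this is
   exactly the graph distance. *)
Definition dist (T : finType) (e : rel T) (u v : T) : nat :=
  find (walk_n e u v) (iota 0 #|T|).

Definition delta4 (T : finType) (e : rel T) (w1 w2 w3 w4 : T) : rat :=
  let a := dist e w1 w2 + dist e w3 w4 in
  let b := dist e w1 w3 + dist e w2 w4 in
  let c := dist e w1 w4 + dist e w2 w3 in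
  let L := maxn a (maxn b c) in
  let S := minn a (minn b c) in
  let M := (a + b + c - L - S)%N in
  ((L - M)%N)%:R / 2%:R.

From HB Require Import structures.
From mathcomp Require Import all_boot all_order all_algebra.
From mathcomp Require Import zify lra.
Import Order.TTheory GRing.Theory Num.Theory.

(* Write a, b, c for d(u0,u1), d(u0,u2), d(u1,u2), and x, y, z for d(u1,u3),
   d(u3,u2), d(u0,u3), so x + y = c and 2x is the even one of c + a - b and
   c + a - b + 1.  Adding the triangle inequalities a <= z + x and b <= z + y
   gives a + b + c <= 2(z + c), the lower bound.  For the upper bound, of the
   three pair sums a + y, b + x, z + c the second equals s exactly and the first
   is at most s; so either z + c is not the largest sum, and then it is at most
   the middle one, or it exceeds the middle one by at least z + c - s. *)

Set Implicit Arguments.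
Unset Strict Implicit.

Section GraphDistance.
Variables (T : finType) (e : rel T).
Hypothesis e_conn : forall u v : T, connect e u v.

Lemma walk_n_cat u v w m k :
  walk_n e u v m -> walk_n e v w k -> walk_n e u w (m + k).
Proof.
move=> /existsP [p /andP [pp /eqP lp]] /existsP [q /andP [pq /eqP lq]].
apply/existsP; exists (cat_tuple p q).
by rewrite /= cat_path last_cat lp pp pq lq eqxx.
Qed.

Lemma walk_n_rev u v n : symmetric e -> walk_n e u v n -> walk_n e v u n.
Proof.
move=> e_sym /existsP [p /andP [pp /eqP lp]].
have sz : size (rev (belast u p)) == n by rewrite size_rev size_belast size_tuple.
apply/existsP; exists (Tuple sz) => /=.
rewrite -lp rev_path (@eq_path _ _ e) => [|a b]; last by rewrite /= e_sym.
rewrite pp /=; case: (tval p) => [|a s] /=; first by rewrite eqxx.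
by rewrite rev_cons last_rcons eqxx.
Qed.

Lemma short_walk u v : exists2 n, (n < #|T|)%N & walk_n e u v n.
Proof.
have /connectP [p pp ->] := e_conn u v.
have [p' pp' up' _] := shortenP pp.
exists (size p').
  by have := max_card (mem (u :: p')); rewrite (card_uniqP up').
by apply/existsP; exists (in_tuple p'); rewrite pp' eqxx.
Qed.

Lemma dist_lt_card_walk u v : (dist e u v < #|T|)%N /\ walk_n e u v (dist e u v).
Proof.
have [n n_lt w] := short_walk u v.
have has_walk : has (walk_n e u v) (iota 0 #|T|).
  by apply/hasP; exists n => //; rewrite mem_iota.
have := nth_find 0 has_walk; rewrite has_find size_iota in has_walk.
by rewrite nth_iota // add0n /dist => ->.
Qed.

Lemma dist_min u v n : (n < #|T|)%N -> walk_n e u v n -> (dist e u v <= n)%N.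
Proof.
move=> n_lt w; rewrite leqNgt; apply/negP => lt_n.
by have := before_find 0 lt_n; rewrite nth_iota // add0n w.
Qed.

Lemma dist_triangle u v w : (dist e u w <= dist e u v + dist e v w)%N.
Proof.
have [_ wuv] := dist_lt_card_walk u v; have [_ wvw] := dist_lt_card_walk v w.
have [uw_lt _] := dist_lt_card_walk u w.
have [lt_card | ge_card] := ltnP (dist e u v + dist e v w) #|T|.
  exact: dist_min lt_card (walk_n_cat wuv wvw).
exact: leq_trans (ltnW uw_lt) ge_card.
Qed.

Lemma dist_sym u v : symmetric e -> dist e u v = dist e v u.
Proof.
move=> e_sym; have [uv_lt wuv] := dist_lt_card_walk u v.
have [vu_lt wvu] := dist_lt_card_walk v u.
apply/eqP; rewrite eqn_leq.
by rewrite !dist_min // walk_n_rev.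
Qed.

End GraphDistance.

Local Open Scope ring_scope.

Lemma ceil_half_bounds (k : int) :
  k <= 2 * Num.ceil (k%:~R / 2 : rat) <= k + 1.
Proof.
have /andP [lt_ceil ceil_le] := ceil_itv (k%:~R / 2 : rat).
set c := Num.ceil _ in lt_ceil ceil_le *.
have k_le : (k%:~R : rat) <= (2 * c)%:~R by rewrite intrM; lra.
have lt_k : ((2 * c - 2)%:~R : rat) < k%:~R.
  by rewrite intrB intrM; rewrite intrB in lt_ceil; lra.
rewrite ler_int in k_le; rewrite ltr_int in lt_k; lia.
Qed.

Theorem mainTheorem1 (T : finType) (e : rel T)
  (e_sym : symmetric e) (e_irr : irreflexive e)
  (e_conn : forall u v : T, connect e u v) (card_T : (4 <= #|T|)%N)
  (u0 u1 u2 u3 : T) :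
  (dist e u1 u3 + dist e u3 u2 = dist e u1 u2)%N ->
  (0 < dist e u0 u1)%N -> (0 < dist e u0 u2)%N -> (0 < dist e u0 u3)%N ->
  (0 < dist e u1 u2)%N -> (0 < dist e u2 u3)%N ->
  ((dist e u1 u3)%:Z =
     Num.ceil (((dist e u1 u2)%:Z + (dist e u0 u1)%:Z - (dist e u0 u2)%:Z)%:~R
               / 2 : rat)) ->
  let s := Num.ceil (((dist e u0 u1 + dist e u0 u2 + dist e u1 u2)%N%:R
                      / 2 : rat)) in
  s <= (dist e u0 u3 + dist e u1 u2)%N%:Z /\
  ((dist e u0 u3 + dist e u1 u2)%N%:R : rat) <= s%:~R + 2 * delta4 e u0 u1 u2 u3.
Proof.
move=> on_geodesic _ _ _ _ _ x_def s.
have tri1 := dist_triangle e_conn u0 u3 u1.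
have tri2 := dist_triangle e_conn u0 u3 u2.
rewrite (dist_sym e_conn u3 u1 e_sym) in tri1.
have := ceil_half_bounds ((dist e u1 u2)%:Z + (dist e u0 u1)%:Z - (dist e u0 u2)%:Z).
rewrite -x_def => x_bounds.
have s_bounds : (dist e u0 u1 + dist e u0 u2 + dist e u1 u2)%N%:Z <= 2 * s
                <= (dist e u0 u1 + dist e u0 u2 + dist e u1 u2)%N%:Z + 1.
  exact: ceil_half_bounds.
rewrite /delta4 (dist_sym e_conn u2 u3 e_sym) [2 * _]mulrC divfK //.
rewrite !pmulrn -intrD ler_int.
split; lia.
Qed.
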